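(* Let $\gamma>1$ and let the pressure function of the ideal MHD equations be $$p(q)=(\gamma-1)\left(\mathcal{E}-\frac{(\rho u_x)^2+(\rho u_y)^2+(\rho u_z)^2}{2\rho}-\frac{1}{2}\left(B_x^2+B_y^2+B_z^2\right)\right)$$ for a state vector $q=(\rho,\rho u_x,\rho u_y,\rho u_z,\mathcal{E},B_x,B_y,B_z)\in\mathbb{R}^8$ with $\rho>0$. Fix a grid index $j$, a ratio $\lambda=\Delta t/\Delta x>0$, a state $q^n_j\in\mathbb{R}^8$, and vectors $\hat{\mathbf F}^{rk}_{j\pm\frac12},\hat{\mathbf f}_{j\pm\frac12}\in\mathbb{R}^8$. For $\overrightarrow{\theta}=(\theta_{j-\frac12},\theta_{j+\frac12})\in\mathbb{R}^2$ define $$q^{n+1}_j(\overrightarrow{\theta})=q^n_j-\lambda\left(\tilde{\mathbf F}_{j+\frac12}-\tilde{\mathbf F}_{j-\frac12}\right),\qquad \tilde{\mathbf F}_{j\pm\frac12}=\theta_{j\pm\frac12}\left(\hat{\mathbf F}^{rk}_{j\pm\frac12}-\hat{\mathbf f}_{j\pm\frac12}\right)+\hat{\mathbf f}_{j\pm\frac12}.$$ Let $S_{\rho,I_j}=[0,\Lambda^\rho_{-\frac12,I_j}]\times[0,\Lambda^\rho_{+\frac12,I_j}]$ be the rectangle defined in the context below. Then for every $\alpha\in[0,1]$ and every $\overrightarrow{\theta}^1,\overrightarrow{\theta}^2\in S_{\rho,I_j}$, $$p\left(q^{n+1}_j\left(\alpha\overrightarrow{\theta}^1+(1-\alpha)\overrightarrow{\theta}^2\right)\right)\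 \ge\ \alpha\, p\left(q^{n+1}_j\left(\overrightarrow{\theta}^1\right)\right)+(1-\alpha)\,p\left(q^{n+1}_j\left(\overrightarrow{\theta}^2\right)\right).$$
   Context: Setting: a finite difference scheme for the 1D ideal MHD equations $q_t+\mathbf f(q)_x=0$ on a uniform grid, where $\hat{\mathbf F}^{rk}_{j+\frac12}$ is a high-order (Runge–Kutta combined WENO) numerical flux and $\hat{\mathbf f}_{j+\frac12}$ is the first-order Lax–Friedrichs flux. Denote by $f^\rho_{j\pm\frac12}$ and $\hat f^\rho_{j\pm\frac12}$ the first (density) components of $\hat{\mathbf F}^{rk}_{j\pm\frac12}$ and $\hat{\mathbf f}_{j\pm\frac12}$, and let $\rho^n_j$ be the first component of $q^n_j$. Set $\Gamma_j=\rho^n_j-\lambda(\hat f^\rho_{j+\frac12}-\hat f^\rho_{j-\frac12})$ (the density of the first-order Lax–Friedrichs update) and let $\epsilon^{n+1}_\rho>0$ be a lower bound with $\Gamma_j\ge\epsilon^{n+1}_\rho$ (in the paper $\epsilon^{n+1}_\rho=\min(\min_j\Gamma_j,\epsilon_0)$ with $\epsilon_0=10^{-13}$, the Lax–Friedrichs densities being positive). Let $F_{j\pm\frac12}=f^\rho_{j\pm\frac12}-\hat f^\rho_{j\pm\frac12}$. The bounds $(\Lambda^\rho_{-\frac12,I_j},\Lambda^\rho_{+\frac12,I_j})$ are defined by: (i) if $F_{j-\frac12}\ge0$ and $F_{j+\frac12}\le0$: $(1,1)$; (ii) if $F_{j-\frac12}\ge0$ and $F_{j+\frac12}>0$: $\left(1,\min\left(1,\frac{\epsilon^{n+1}_\rho-\Gamma_j}{-\lambda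 F_{j+\frac12}}\right)\right)$; (iii) if $F_{j-\frac12}<0$ and $F_{j+\frac12}\le0$: $\left(\min\left(1,\frac{\epsilon^{n+1}_\rho-\Gamma_j}{\lambda F_{j-\frac12}}\right),1\right)$; (iv) if $F_{j-\frac12}<0$ and $F_{j+\frac12}>0$: $(1,1)$ if $\lambda F_{j-\frac12}-\lambda F_{j+\frac12}\ge\epsilon^{n+1}_\rho-\Gamma_j$, and otherwise both bounds equal $\frac{\epsilon^{n+1}_\rho-\Gamma_j}{\lambda F_{j-\frac12}-\lambda F_{j+\frac12}}$. With these bounds, the density (first component) of $q^{n+1}_j(\overrightarrow\theta)$ is at least $\epsilon^{n+1}_\rho$ for all $\overrightarrow\theta\in S_{\rho,I_j}$. *)

From HB Require Import structures.
From mathcomp Require Import all_boot all_order all_algebra.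
Set Implicit Arguments. Unset Strict Implicit. Unset Printing Implicit Defensive.
Import Order.TTheory GRing.Theory Num.Theory.
Local Open Scope ring_scope.

Section MHD.
Variable R : realFieldType.

(* component k (0-based) of a state vector q = (rho, rho ux, rho uy, rho uz, E, Bx, By, Bz) *)
Definition comp (q : 'rV[R]_8) (k : nat) : R := q 0 (inord k).

Definition pressure (gamma : R) (q : 'rV[R]_8) : R :=
  (gamma - 1) * (comp q 4
     - (comp q 1 ^+ 2 + comp q 2 ^+ 2 + comp q 3 ^+ 2) / (2 * comp q 0)
     - (comp q 5 ^+ 2 + comp q 6 ^+ 2 + comp q 7 ^+ 2) / 2).

Definition Ftilde (theta : R) (Frk fh : 'rV[R]_8) : 'rV[R]_8 :=
  theta *: (Frk - fh) + fh.

Definition qnext (lam : R) (qn Frk_m Frk_p fh_m fh_p : 'rV[R]_8) (th : R * R)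
  : 'rV[R]_8 :=
  qn - lam *: (Ftilde th.2 Frk_p fh_p - Ftilde th.1 Frk_m fh_m).

(* Gamma_j : density of the first-order Lax-Friedrichs update *)
Definition GammaLF (lam : R) (qn fh_m fh_p : 'rV[R]_8) : R :=
  comp qn 0 - lam * (comp fh_p 0 - comp fh_m 0).

Definition Lambda_rho (lam eps : R) (qn Frk_m Frk_p fh_m fh_p : 'rV[R]_8) : R * R :=
  let G := GammaLF lam qn fh_m fh_p in
  let Fm := comp Frk_m 0 - comp fh_m 0 in
  let Fp := comp Frk_p 0 - comp fh_p 0 in
  if (0 <= Fm) then
    (if Fp <= 0 then (1, 1)
     else (1, Num.min 1 ((eps - G) / (- (lam * Fp)))))
  else
    (if Fp <= 0 then (Num.min 1 ((eps - G) / (lam * Fm)), 1)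
     else if eps - G <= lam * Fm - lam * Fp then (1, 1)
     else ((eps - G) / (lam * Fm - lam * Fp), (eps - G) / (lam * Fm - lam * Fp))).

Definition in_S_rho (lam eps : R) (qn Frk_m Frk_p fh_m fh_p : 'rV[R]_8) (th : R * R) : Prop :=
  let L := Lambda_rho lam eps qn Frk_m Frk_p fh_m fh_p in
  0 <= th.1 <= L.1 /\ 0 <= th.2 <= L.2.

End MHD.

(* The pressure is concave in the conservative variables wherever the density
   is positive: it is a linear function minus the kinetic energy
   |rho u|^2 / (2 rho), a sum of quadratic-over-linear (perspective) functions,
   minus the magnetic energy |B|^2 / 2, both convex.  The limited update
   q^{n+1}_j(theta) is affine in theta, so it suffices that its density stays
   positive on S_{rho,I_j}; this is exactly what the bounds Lambda^rho were
   designed for, since the density there is at least eps > 0. *)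

From Pilot Require Import Defs.
From HB Require Import structures.
From mathcomp Require Import all_boot all_order all_algebra.
From mathcomp Require Import ring lra.
Set Implicit Arguments. Unset Strict Implicit. Unset Printing Implicit Defensive.
Import Order.TTheory GRing.Theory Num.Theory.
Local Notation comp := Defs.comp.
Local Open Scope ring_scope.

Lemma convex_comb_gt0 (R : realFieldType) (a b r s : R) :
  0 <= a -> 0 <= b -> a + b = 1 -> 0 < r -> 0 < s -> 0 < a * r + b * s.
Proof.
move=> a_ge0 b_ge0 ab1 r_gt0 s_gt0.
move: a_ge0; rewrite le0r => /orP[/eqP a0 | a_gt0].
  have -> : b = 1 by lra.
  by rewrite a0 mul0r add0r mul1r.
have := mulr_gt0 a_gt0 r_gt0; have := mulr_ge0 b_ge0 (ltW s_gt0); lra.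
Qed.

Lemma sqr_convex (R : realFieldType) (a b x y : R) :
  0 <= a -> 0 <= b -> a + b = 1 ->
  (a * x + b * y) ^+ 2 <= a * x ^+ 2 + b * y ^+ 2.
Proof.
move=> a_ge0 b_ge0 ab1; rewrite -subr_ge0.
have -> : a * x ^+ 2 + b * y ^+ 2 - (a * x + b * y) ^+ 2 = a * b * (x - y) ^+ 2.
  by rewrite (_ : b = 1 - a); [ring | lra].
by rewrite mulr_ge0 ?sqr_ge0 ?mulr_ge0.
Qed.

Lemma sqr_div_convex (R : realFieldType) (a b x y r s : R) :
  0 <= a -> 0 <= b -> a + b = 1 -> 0 < r -> 0 < s ->
  (a * x + b * y) ^+ 2 / (a * r + b * s) <= a * (x ^+ 2 / r) + b * (y ^+ 2 / s).
Proof.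
move=> a_ge0 b_ge0 ab1 r_gt0 s_gt0.
have rs_gt0 := convex_comb_gt0 a_ge0 b_ge0 ab1 r_gt0 s_gt0.
rewrite -subr_ge0.
have -> : a * (x ^+ 2 / r) + b * (y ^+ 2 / s) - (a * x + b * y) ^+ 2 / (a * r + b * s)
    = a * b * (x * s - y * r) ^+ 2 / (r * s * (a * r + b * s)).
  rewrite (_ : b = 1 - a); last by lra.
  by field; rewrite (_ : 1 - a = b) ?gt_eqF //; lra.
apply: divr_ge0; first by rewrite mulr_ge0 ?sqr_ge0 // mulr_ge0.
by apply/ltW/mulr_gt0 => //; apply: mulr_gt0.
Qed.

Lemma comp_convex_comb (R : realFieldType) (a b : R) (q1 q2 : 'rV[R]_8) (k : nat) :
  comp (a *: q1 + b *: q2) k = a * comp q1 k + b * comp q2 k.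
Proof. by rewrite /Defs.comp !mxE. Qed.

Lemma pressure_concave (R : realFieldType) (gamma a b : R) (q1 q2 : 'rV[R]_8) :
  1 <= gamma -> 0 <= a -> 0 <= b -> a + b = 1 ->
  0 < comp q1 0 -> 0 < comp q2 0 ->
  a * pressure gamma q1 + b * pressure gamma q2 <= pressure gamma (a *: q1 + b *: q2).
Proof.
move=> gamma_ge1 a_ge0 b_ge0 ab1 rho1_gt0 rho2_gt0.
have kinetic_split (x y z w : R) : 0 < w ->
    (x ^+ 2 + y ^+ 2 + z ^+ 2) / (2 * w) = (x ^+ 2 / w + y ^+ 2 / w + z ^+ 2 / w) / 2.
  by move=> w_gt0; field; rewrite gt_eqF.
have rho_gt0 := convex_comb_gt0 a_ge0 b_ge0 ab1 rho1_gt0 rho2_gt0.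
rewrite /pressure !comp_convex_comb !kinetic_split //.
have m1 := sqr_div_convex (comp q1 1) (comp q2 1) a_ge0 b_ge0 ab1 rho1_gt0 rho2_gt0.
have m2 := sqr_div_convex (comp q1 2) (comp q2 2) a_ge0 b_ge0 ab1 rho1_gt0 rho2_gt0.
have m3 := sqr_div_convex (comp q1 3) (comp q2 3) a_ge0 b_ge0 ab1 rho1_gt0 rho2_gt0.
have B1 := sqr_convex (comp q1 5) (comp q2 5) a_ge0 b_ge0 ab1.
have B2 := sqr_convex (comp q1 6) (comp q2 6) a_ge0 b_ge0 ab1.
have B3 := sqr_convex (comp q1 7) (comp q2 7) a_ge0 b_ge0 ab1.
rewrite mulrCA [b * ((gamma - 1) * _)]mulrCA -mulrDr.
by apply: ler_wpM2l; lra.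
Qed.

Section LimitedUpdate.
Variable R : realFieldType.
Variables (lam eps : R) (qn Frk_m Frk_p fh_m fh_p : 'rV[R]_8).

Local Notation qnext := (qnext lam qn Frk_m Frk_p fh_m fh_p).

Lemma qnext_convex_comb (a b : R) (th1 th2 : R * R) : a + b = 1 ->
  qnext (a * th1.1 + b * th2.1, a * th1.2 + b * th2.2) = a *: qnext th1 + b *: qnext th2.
Proof.
move=> ab1; apply/rowP => k; rewrite /Defs.qnext /Ftilde !mxE /=.
by rewrite (_ : b = 1 - a); [ring | lra].
Qed.

Lemma qnext_density (th : R * R) :
  comp (qnext th) 0 = GammaLF lam qn fh_m fh_p
    + lam * th.1 * (comp Frk_m 0 - comp fh_m 0) - lam * th.2 * (comp Frk_p 0 - comp fh_p 0).
Proof. by rewrite /GammaLF /Defs.comp /Defs.qnext /Ftilde !mxE; ring. Qed.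

Lemma qnext_density_ge (th : R * R) :
  0 < lam -> eps <= GammaLF lam qn fh_m fh_p ->
  in_S_rho lam eps qn Frk_m Frk_p fh_m fh_p th -> eps <= comp (qnext th) 0.
Proof.
move=> lam_gt0 G_ge; rewrite qnext_density /in_S_rho /Lambda_rho.
move: G_ge; set G := GammaLF _ _ _ _ => G_ge.
set Fm := comp Frk_m 0 - comp fh_m 0; set Fp := comp Frk_p 0 - comp fh_p 0.
case: th => t1 t2 /=.
have incoming_ge0 t : 0 <= t -> 0 <= Fm -> 0 <= lam * t * Fm.
  by move=> *; rewrite !mulr_ge0 // ltW.
have outgoing_le0 t : 0 <= t -> Fp <= 0 -> lam * t * Fp <= 0.
  by move=> t_ge0 Fp_le0; rewrite mulr_ge0_le0 // mulr_ge0 // ltW.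
case: (lerP 0 Fm) => Fm_ge0; case: (lerP Fp 0) => Fp_le0 /=.
- move=> [/andP[t1_ge0 _] /andP[t2_ge0 _]].
  have := incoming_ge0 _ t1_ge0 Fm_ge0; have := outgoing_le0 _ t2_ge0 Fp_le0; lra.
- move=> [/andP[t1_ge0 _] /andP[_]]; rewrite le_min => /andP[_].
  rewrite ler_ndivlMr ?oppr_lt0 ?mulr_gt0 // => outflow.
  have := incoming_ge0 _ t1_ge0 Fm_ge0; have : t2 * - (lam * Fp) = - (lam * t2 * Fp) by ring.
  lra.
- move=> [/andP[_]]; rewrite le_min => /andP[_].
  rewrite ler_ndivlMr ?pmulr_rlt0 // => inflow /andP[t2_ge0 _].
  have := outgoing_le0 _ t2_ge0 Fp_le0; have : t1 * (lam * Fm) = lam * t1 * Fm by ring.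
  lra.
(* Both interfaces take mass out of the cell; a common bound c on the thetas
   caps the total outflow at c (lam Fm - lam Fp). *)
have lamFm_lt0 : lam * Fm < 0 by rewrite pmulr_rlt0.
have lamFp_gt0 : 0 < lam * Fp by rewrite mulr_gt0.
have both_out c : t1 <= c -> t2 <= c ->
    c * (lam * Fm - lam * Fp) <= lam * t1 * Fm - lam * t2 * Fp.
  move=> t1_le t2_le.
  have := ler_wnM2r (ltW lamFm_lt0) t1_le; have := ler_wpM2r (ltW lamFp_gt0) t2_le.
  have : lam * t1 * Fm = t1 * (lam * Fm) by ring.
  have : lam * t2 * Fp = t2 * (lam * Fp) by ring.
  lra.
case: ifP => [flux_ge | /negbT]; last rewrite -ltNge => flux_lt;
  move=> [/andP[_ t1_le] /andP[_ t2_le]].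
  have := both_out 1 t1_le t2_le; lra.
have := both_out _ t1_le t2_le.
by rewrite divfK ?ltr0_neq0 //; lra.
Qed.

End LimitedUpdate.

Theorem lemma1 (R : realFieldType) (gamma lam eps : R)
  (qn Frk_m Frk_p fh_m fh_p : 'rV[R]_8)
  (hgamma : 1 < gamma) (hlam : 0 < lam) (heps : 0 < eps)
  (hGamma : eps <= GammaLF lam qn fh_m fh_p)
  (alpha : R) (halpha : 0 <= alpha <= 1) (th1 th2 : R * R)
  (h1 : in_S_rho lam eps qn Frk_m Frk_p fh_m fh_p th1)
  (h2 : in_S_rho lam eps qn Frk_m Frk_p fh_m fh_p th2) :
  alpha * pressure gamma (qnext lam qn Frk_m Frk_p fh_m fh_p th1)
  + (1 - alpha) * pressure gamma (qnext lam qn Frk_m Frk_p fh_m fh_p th2)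
  <= pressure gamma (qnext lam qn Frk_m Frk_p fh_m fh_p
        (alpha * th1.1 + (1 - alpha) * th2.1, alpha * th1.2 + (1 - alpha) * th2.2)).
Proof.
have weights : alpha + (1 - alpha) = 1 by ring.
have rho1 := qnext_density_ge hlam hGamma h1.
have rho2 := qnext_density_ge hlam hGamma h2.
case/andP: halpha => alpha_ge0 alpha_le1.
rewrite qnext_convex_comb //; apply: pressure_concave => //; lra.
Qed.
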